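(* Let $(R,\mathfrak{m},k)$ be a commutative Noetherian local ring and let $(\mathbf{F},\partial)$ be a minimal Tate resolution of $k$ over $R$. Then the linear part $\operatorname{lin}^R(\mathbf{F})$ has a structure of (graded commutative) DG algebra over $R^{\mathsf g}$ induced by that of $\mathbf{F}$: for $x\in\mathfrak{m}^iF_n$ and $y\in\mathfrak{m}^jF_m$ with classes $x^*\in\mathfrak{m}^iF_n/\mathfrak{m}^{i+1}F_n$ and $y^*\in\mathfrak{m}^jF_m/\mathfrak{m}^{j+1}F_m$, the product $x^*y^*$ is the class of $xy$ in $\mathfrak{m}^{i+j}F_{n+m}/\mathfrak{m}^{i+j+1}F_{n+m}$.
   Context: A (graded commutative) DG algebra over a commutative ring $S$ is a non-negative $S$-complex $(\mathbf{D},\partial)$ with a morphism of complexes $\mathbf{D}\otimes_S\mathbf{D}\to\mathbf{D}$, $a\otimes b\mapsto ab$, which is unital, associative, and graded commutative ($ab=(-1)^{|a||b|}ba$, and $a^2=0$ when $|a|$ is odd); being a morphism of complexes amounts to the Leibniz rule $\partial(ab)=\partial(a)b+(-1)^{|a|}a\partial(b)$. A minimal Tate resolution of $k$ is a minimal free resolution $\mathbf{F}$ of $k$ over $R$ (finitely generated free modules, $\partial(F_i)\subseteq\mathfrak{m}F_{i-1}$) carrying a DG algebra structure over $R$. $R^{\mathsf g}=\bigoplus_{i\ge0}\mathfrak{m}^i/\mathfrak{m}^{i+1}$. The linear part $\operatorname{lin}^R(\mathbf{F})$ is the associated graded complex of the filtration $(\mathfrak{F}^p\mathbf{F})_i=\mathfrak{m}^{p-i}F_i$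 ($\mathfrak{m}^j=R$ for $j\le0$); it is a complex of graded free $R^{\mathsf g}$-modules with $\operatorname{lin}^R_n(\mathbf{F})=F_n^{\mathsf g}(-n)$, $F_n^{\mathsf g}=\bigoplus_{i\ge0}\mathfrak{m}^iF_n/\mathfrak{m}^{i+1}F_n$, and differential sending the class of $x\in\mathfrak{m}^iF_n$ to the class of $\partial(x)$ in $\mathfrak{m}^{i+1}F_{n-1}/\mathfrak{m}^{i+2}F_{n-1}$. *)

From HB Require Import structures.
From mathcomp Require Import all_boot all_order all_algebra.
Set Implicit Arguments. Unset Strict Implicit. Unset Printing Implicit Defensive.
Import Order.TTheory GRing.Theory Num.Theory.
Local Open Scope ring_scope.

Section Ring.
Variable R : comNzRingType.

Definition is_ideal (I : R -> Prop) : Prop :=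
  [/\ I 0, (forall x y, I x -> I y -> I (x + y)) & (forall a x, I x -> I (a * x))].

Definition fin_gen (I : R -> Prop) : Prop :=
  exists s : seq R, forall x,
    I x <-> exists c : 'I_(size s) -> R, x = \sum_(k < size s) c k * s`_k.

Definition noetherian : Prop := forall I, is_ideal I -> fin_gen I.

Definition local_max (m : R -> Prop) : Prop :=
  [/\ is_ideal m, ~ m 1 & forall x, ~ m x -> exists y, x * y = 1].

Fixpoint mpow (m : R -> Prop) (i : nat) : R -> Prop :=
  match i with
  | 0 => fun _ => True
  | i'.+1 => fun x => exists s : seq (R * R),
      (forall q, q \in s -> m q.1 /\ mpow m i' q.2) /\
      x = \sum_(q <- s) q.1 * q.2
  end.

Definition filtM (m : R -> Prop) (i : nat) (V : lmodType R) (v : V) : Prop :=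
  exists s : seq (R * V), (forall q, q \in s -> mpow m i q.1) /\
    v = \sum_(q <- s) q.1 *: q.2.

Definition free_fg (V : lmodType R) : Prop :=
  exists r (b : 'I_r -> V), forall v : V,
    exists! c : {ffun 'I_r -> R}, v = \sum_(k < r) c k *: b k.

(* class of x in m^i V / m^(i+1) V, as a subset of V (the coset
   x + m^(i+1)V inside m^iV; empty if x is not in m^iV) *)
Definition cls (m : R -> Prop) (V : lmodType R) (i : nat) (x : V) : V -> Prop :=
  fun z => filtM m i z /\ filtM m i.+1 (z - x).

(* class of r in m^k / m^(k+1), i.e. a homogeneous element of R^g *)
Definition clsR (m : R -> Prop) (k : nat) (r : R) : R -> Prop :=
  fun z => mpow m k z /\ mpow m k.+1 (z - r).

Definition addC (V : lmodType R) (P Q : V -> Prop) : V -> Prop :=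
  fun z => exists x y, [/\ P x, Q y & z = x + y].

Definition signC (V : lmodType R) (e : nat) (P : V -> Prop) : V -> Prop :=
  if odd e then (fun z => P (- z)) else P.

Definition actL (m : R -> Prop) (V : lmodType R) (k i : nat)
    (A : R -> Prop) (P : V -> Prop) : V -> Prop :=
  fun z => filtM m (k + i) z /\
    exists r x, [/\ A r, P x & filtM m (k + i).+1 (z - r *: x)].

End Ring.

Section Complex.
Variable R : comNzRingType.
Variable m : R -> Prop.
Variable F : nat -> lmodType R.
Variable d : forall n, {linear F n.+1 -> F n}.
Variable mul : forall n p, F n -> F p -> F (n + p).
Variable one : F 0.

Definition castF n p (e : n = p) (x : F n) : F p := eq_rect n F x p e.
Definition castP n p (e : n = p) (P : F n -> Prop) : F p -> Prop :=
  eq_rect n (fun k => F k -> Prop) P p e.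

Definition is_complex : Prop := forall n (x : F n.+2), d n (d n.+1 x) = 0.

(* resolution of k = R/m: exact in positive degrees, and H_0(F) = F_0/im d_0
   is isomorphic to R/m via an augmentation eps : F_0 -> R *)
Definition resolves_residue_field : Prop :=
  (forall n (x : F n.+1), d n x = 0 -> exists y, x = d n.+1 y) /\
  exists eps : {linear F 0 -> R^o},
    (exists x, eps x = 1) /\ (forall x, m (eps x) <-> exists y, x = d 0 y).

Definition minimal_free : Prop :=
  (forall n, free_fg (F n)) /\ (forall n (x : F n.+1), filtM m 1 (d n x)).

Definition is_DG_algebra : Prop :=
  [/\ (forall n p (a : R) (x x' : F n) (y : F p),
          mul (a *: x + x') y = a *: mul x y + mul x' y),
      (forall n p (a : R) (x : F n) (y y' : F p),
          mul x (a *: y + y') = a *: mul x y + mul x y'),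
      (forall n (x : F n), castF (add0n n) (mul one x) = x),
      (forall n p q (x : F n) (y : F p) (z : F q),
          castF (addnA n p q) (mul x (mul y z)) = mul (mul x y) z) &
   [/\ (forall n p (x : F n) (y : F p),
          mul x y = castF (addnC p n) ((-1) ^+ (n * p) *: mul y x)),
      (forall n (x : F n), odd n -> mul x x = 0) &
      [/\ (forall n p (x : F n.+1) (y : F p.+1),
             d (n + p.+1) (mul x y) =
             mul (d n x) y + (-1) ^+ n.+1 *: castF (esym (addnS n p)) (mul x (d p y))),
          (forall p (x : F 0) (y : F p.+1), d p (mul x y) = mul x (d p y)) &
          (forall n (x : F n.+1) (y : F 0), d (n + 0) (mul x y) = mul (d n x) y)]]].

(* The linear part lin(F).  Its homogeneous pieces are m^iF_n/m^(i+1)F_n     *)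
(* (internal degree i+n, homological degree n); classes are represented as   *)

Definition dL (i n : nat) (P : F n.+1 -> Prop) : F n -> Prop :=
  fun z => filtM m i.+1 z /\ exists x, P x /\ filtM m i.+2 (z - d n x).

Definition mulL (i j : nat) n p (P : F n -> Prop) (Q : F p -> Prop) :
    F (n + p) -> Prop :=
  fun z => filtM m (i + j) z /\
    exists x y, [/\ P x, Q y & filtM m (i + j).+1 (z - mul x y)].

Local Notation filt := (filtM m).
Local Notation cl := (cls m).

(* All statements
   are on homogeneous classes (bidegree (i,n)), which determine the
   structure on the direct sums lin_n = (+)_i m^iF_n/m^(i+1)F_n. *)
Definition lin_is_DG_algebra : Prop :=
  [/\
      (forall i j n p (x : F n) (y : F p), filt i x -> filt j y ->
         filt (i + j) (mul x y) /\
         mulL i j (cl i x) (cl j y) = cl (i + j) (mul x y)),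
      (forall i j n p (x x' : F n) (y : F p), filt i x -> filt i x' -> filt j y ->
         mulL i j (addC (cl i x) (cl i x')) (cl j y) =
         addC (mulL i j (cl i x) (cl j y)) (mulL i j (cl i x') (cl j y))) /\
      (forall i j n p (x : F n) (y y' : F p), filt i x -> filt j y -> filt j y' ->
         mulL i j (cl i x) (addC (cl j y) (cl j y')) =
         addC (mulL i j (cl i x) (cl j y)) (mulL i j (cl i x) (cl j y'))),
      (forall k i j n p (r : R) (x : F n) (y : F p),
         mpow m k r -> filt i x -> filt j y ->
         mulL (k + i) j (actL m k i (clsR m k r) (cl i x)) (cl j y) =
         actL m k (i + j) (clsR m k r) (mulL i j (cl i x) (cl j y)) /\
         mulL i (k + j) (cl i x) (actL m k j (clsR m k r) (cl j y)) =
         actL m k (i + j) (clsR m k r) (mulL i j (cl i x) (cl j y))),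
      (forall i n (x : F n), filt i x ->
         castP (add0n n) (mulL 0 i (cl 0 one) (cl i x)) = cl i x) &
   [/\
      (forall i j k n p q (x : F n) (y : F p) (z : F q),
         filt i x -> filt j y -> filt k z ->
         castP (addnA n p q) (mulL i (j + k) (cl i x) (mulL j k (cl j y) (cl k z)))
         = mulL (i + j) k (mulL i j (cl i x) (cl j y)) (cl k z)) &
      [/\
          (forall i j n p (x : F n) (y : F p), filt i x -> filt j y ->
             mulL i j (cl i x) (cl j y) =
             castP (addnC p n) (signC (n * p) (mulL j i (cl j y) (cl i x)))),
          (forall i n (x : F n), odd n -> filt i x ->
             mulL i i (cl i x) (cl i x) = cl (i + i) (0 : F (n + n))) &
          [/\ (forall i j n p (x : F n.+1) (y : F p.+1), filt i x -> filt j y ->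
                 dL (i + j) (mulL i j (cl i x) (cl j y)) =
                 addC (mulL i.+1 j (dL i (cl i x)) (cl j y))
                      (signC n.+1 (castP (esym (addnS n p))
                                   (mulL i j.+1 (cl i x) (dL j (cl j y)))))),
              (forall i j p (x : F 0) (y : F p.+1), filt i x -> filt j y ->
                 dL (i + j) (mulL i j (cl i x) (cl j y)) =
                 mulL i j.+1 (cl i x) (dL j (cl j y))) &
              (forall i j n (x : F n.+1) (y : F 0), filt i x -> filt j y ->
                 dL (i + j) (mulL i j (cl i x) (cl j y)) =
                 mulL i.+1 j (dL i (cl i x)) (cl j y))]]]].

End Complex.

From Pilot Require Import Defs.
From HB Require Import structures.
From mathcomp Require Import all_boot all_algebra.
From Stdlib Require Import FunctionalExtensionality PropExtensionality.
Set Implicit Arguments. Unset Strict Implicit. Unset Printing Implicit Defensive.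
Import GRing.Theory.
Local Open Scope ring_scope.

(* Since
   m^i m^j is contained in m^(i+j), the product of F is filtered of degree 0
   and, by minimality, the differential is filtered of degree 1.  Hence
   both induce well-defined operations on cosets, computed on
   representatives: [x][y] = [xy] and d[x] = [dx]; likewise for sums,
   signs and the action of R^g.  Each DG-algebra axiom for lin(F) is then
   the image of the same axiom for F.  Only the facts that m is an ideal and
   that d(F) lies in mF are needed. *)

Lemma pred_ext (T : Type) (P Q : T -> Prop) : (forall z, P z <-> Q z) -> P = Q.
Proof.
move=> PQ; apply: functional_extensionality => z.
exact/propositional_extensionality/PQ.
Qed.

Section IdealFiltration.
Variables (R : comNzRingType) (m : R -> Prop).
Hypothesis m_ideal : is_ideal m.

Lemma mpow0 k : mpow m k 0.
Proof. by case: k => //= k; exists [::]; rewrite big_nil. Qed.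

Lemma mpow_mull k a x : mpow m k x -> mpow m k (a * x).
Proof.
case: m_ideal => _ _ m_mull.
case: k => //= k [s [s_mpow ->]]; exists [seq (a * q.1, q.2) | q <- s]; split.
  by move=> _ /mapP [q /s_mpow [mq1 q2_mpow] ->]; split => //; apply: m_mull.
by rewrite big_map mulr_sumr; apply: eq_bigr => q _; rewrite mulrA.
Qed.

Lemma mpow_mul i j a b : mpow m i a -> mpow m j b -> mpow m (i + j) (a * b).
Proof.
elim: i a => [|i IHi] a /=; first by move=> _; apply: mpow_mull.
move=> [s [s_mpow ->]] b_mpow; exists [seq (q.1, q.2 * b) | q <- s]; split.
  by move=> _ /mapP [q /s_mpow [mq1 q2_mpow] ->]; split => //; apply: IHi.
by rewrite big_map mulr_suml; apply: eq_bigr => q _; rewrite mulrA.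
Qed.

Section Module.
Variable V : lmodType R.
Implicit Types (x y : V).

Lemma filtM0 i : filtM m i (0 : V).
Proof. by exists [::]; rewrite big_nil. Qed.

Lemma filtMD i x y : filtM m i x -> filtM m i y -> filtM m i (x + y).
Proof.
move=> [s [s_mpow ->]] [t [t_mpow ->]]; exists (s ++ t); rewrite big_cat.
by split => // q; rewrite mem_cat => /orP [/s_mpow | /t_mpow].
Qed.

Lemma filtM_deg0 x : filtM m 0 x.
Proof. by exists [:: (1, x)]; rewrite big_seq1 scale1r. Qed.

Lemma filtM_mpowZ k i r x : mpow m k r -> filtM m i x -> filtM m (k + i) (r *: x).
Proof.
move=> r_mpow [s [s_mpow ->]]; exists [seq (r * q.1, q.2) | q <- s]; split.
  by move=> _ /mapP [q /s_mpow q1_mpow ->]; apply: mpow_mul.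
by rewrite big_map scaler_sumr; apply: eq_bigr => q _; rewrite scalerA.
Qed.

Lemma filtMZ i a x : filtM m i x -> filtM m i (a *: x).
Proof.
move=> [s [s_mpow ->]]; exists [seq (q.1, a *: q.2) | q <- s]; split.
  by move=> _ /mapP [q /s_mpow ? ->].
by rewrite big_map scaler_sumr; apply: eq_bigr => q _; rewrite !scalerA mulrC.
Qed.

Lemma filtMN i x : filtM m i (- x) <-> filtM m i x.
Proof. by split => /(filtMZ (-1)); rewrite scaleN1r ?opprK. Qed.

Lemma filtMB i x y : filtM m i x -> filtM m i y -> filtM m i (x - y).
Proof. by move=> fx /filtMN; apply: filtMD. Qed.

End Module.

Lemma filtM_linear (V W : lmodType R) (g : {linear V -> W}) i j v :
  (forall u, filtM m j (g u)) -> filtM m i v -> filtM m (i + j) (g v).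
Proof.
move=> g_filt [s [s_mpow ->]]; rewrite linear_sum big_seq.
apply: big_ind => [|? ?|q /s_mpow q1_mpow]; first exact: filtM0.
  exact: filtMD.
by rewrite linearZ; apply: filtM_mpowZ.
Qed.

Lemma filtM_bilinear (U V W : lmodType R) (f : {bilinear U -> V -> W}) i j x y :
  filtM m i x -> filtM m j y -> filtM m (i + j) (f x y).
Proof.
move=> fx fy; have fuy u : filtM m j (f u y).
  by rewrite -[j]addn0; apply: (filtM_linear (g := f u)) fy => v; apply: filtM_deg0.
exact: (filtM_linear (g := applyr f y)) fx.
Qed.

End IdealFiltration.

Definition gr_class (T : zmodType) (f : nat -> T -> Prop) i (x : T) : T -> Prop :=
  fun z => f i z /\ f i.+1 (z - x).

Section InducedProduct.
Variables (U V W : zmodType) (fU : nat -> U -> Prop) (fV : nat -> V -> Prop).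
Variables (fW : nat -> W -> Prop) (op : U -> V -> W).
Hypothesis fW_add : forall k z z', fW k z -> fW k z' -> fW k (z + z').
Hypotheses (fU0 : forall k, fU k 0) (fV0 : forall k, fV k 0).
Hypothesis op_filt : forall i j x y, fU i x -> fV j y -> fW (i + j) (op x y).
Hypothesis opBl : forall y, {morph op^~ y : x x' / x - x'}.
Hypothesis opBr : forall x, {morph op x : y y' / y - y'}.

Definition gr_prod i j (P : U -> Prop) (Q : V -> Prop) : W -> Prop :=
  fun z => fW (i + j) z /\
    exists x y, [/\ P x, Q y & fW (i + j).+1 (z - op x y)].

Lemma gr_prod_class i j x y : fU i x -> fV j y ->
  gr_prod i j (gr_class fU i x) (gr_class fV j y) = gr_class fW (i + j) (op x y).
Proof.
move=> fx fy; apply: pred_ext => z; split.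
  move=> [fz [x1 [y1 [[fx1 fx1x] [fy1 fy1y] fz1]]]]; split => //.
  have -> : z - op x y = (z - op x1 y1) + (op (x1 - x) y1 + op x (y1 - y)).
    by rewrite opBl opBr !addrA !subrK.
  apply: fW_add => //; apply: fW_add; first by rewrite -addSn; apply: op_filt.
  by rewrite -addnS; apply: op_filt.
move=> [fz fzxy]; split => //; exists x, y.
by split => //; split; rewrite ?subrr.
Qed.

End InducedProduct.

Section Classes.
Variables (R : comNzRingType) (m : R -> Prop).
Hypothesis m_ideal : is_ideal m.

Lemma addC_cls (V : lmodType R) i (x x' : V) : filtM m i x' ->
  Defs.addC (cls m i x) (cls m i x') = cls m i (x + x').
Proof.
move=> fx'; apply: pred_ext => z; split.
  move=> [y [y' [[fy fyx] [fy' fyx'] ->]]]; split; first exact: filtMD.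
  by rewrite opprD addrACA; apply: filtMD.
move=> [fz fzx]; exists (z - x'), x'; split; last by rewrite subrK.
- by split; [apply: filtMB | rewrite addrAC -addrA -opprD].
- by split; rewrite ?subrr //; apply: filtM0.
Qed.

Lemma signC_cls (V : lmodType R) e i (x : V) :
  signC e (cls m i x) = cls m i ((-1) ^+ e *: x).
Proof.
rewrite /signC -signr_odd; case: (odd e); last by rewrite expr0 scale1r.
rewrite expr1 scaleN1r; apply: pred_ext => z.
by rewrite /cls -opprD opprK !filtMN.
Qed.

Lemma castP_cls (F : nat -> lmodType R) n p (e : n = p) i (x : F n) :
  castP e (cls m i x) = cls m i (castF e x).
Proof. by case: p / e. Qed.

Lemma filtM_castF (F : nat -> lmodType R) n p (e : n = p) i (x : F n) :
  filtM m i x -> filtM m i (castF e x).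
Proof. by case: p / e. Qed.

Lemma actL_cls (V : lmodType R) k i r (x : V) : mpow m k r -> filtM m i x ->
  actL m k i (clsR m k r) (cls m i x) = cls m (k + i) (r *: x).
Proof.
move=> r_mpow fx.
exact: (gr_prod_class (op := fun r (v : V) => r *: v) (filtMD (V := V)) (mpow0 m)
  (@filtM0 _ m V) (filtM_mpowZ m_ideal (V := V)) (fun v a b => scalerBl a b v)
  (@scalerBr _ V) r_mpow fx).
Qed.

End Classes.

Section LinearPart.
Variables (R : comNzRingType) (m : R -> Prop) (F : nat -> lmodType R).
Variables (d : forall n, {linear F n.+1 -> F n}).
Variables (mul : forall n p, F n -> F p -> F (n + p)) (one : F 0).
Hypothesis m_ideal : is_ideal m.
Hypothesis d_minimal : forall n (x : F n.+1), filtM m 1 (d n x).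
Hypothesis mul_linearl : forall n p (a : R) (x x' : F n) (y : F p),
  mul (a *: x + x') y = a *: mul x y + mul x' y.
Hypothesis mul_linearr : forall n p (a : R) (x : F n) (y y' : F p),
  mul x (a *: y + y') = a *: mul x y + mul x y'.

Local Notation filt := (filtM m).
Local Notation cl := (cls m).

Definition mul_bilinear n p : {bilinear F n -> F p -> F (n + p)} :=
  HB.pack (@mul n p) (bilinear_isBilinear.Build R _ _ _ *:%R *:%R (@mul n p)
    (fun y a x x' => mul_linearl a x x' y, fun x a y y' => mul_linearr a x y y')).

Lemma mulDl n p (x x' : F n) (y : F p) : mul (x + x') y = mul x y + mul x' y.
Proof. exact: (linearDl (mul_bilinear n p) y x x'). Qed.

Lemma mulDr n p (x : F n) (y y' : F p) : mul x (y + y') = mul x y + mul x y'.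
Proof. exact: (linearDr (mul_bilinear n p) x y y'). Qed.

Lemma mulZl n p (a : R) (x : F n) (y : F p) : mul (a *: x) y = a *: mul x y.
Proof. exact: (linearZl_LR (mul_bilinear n p) y a x). Qed.

Lemma mulZr n p (a : R) (x : F n) (y : F p) : mul x (a *: y) = a *: mul x y.
Proof. exact: (linearZr_LR (mul_bilinear n p) x a y). Qed.

Lemma filtM_mul i j n p (x : F n) (y : F p) :
  filt i x -> filt j y -> filt (i + j) (mul x y).
Proof. exact: (filtM_bilinear m_ideal (mul_bilinear n p)). Qed.

Lemma mulL_cls i j n p (x : F n) (y : F p) : filt i x -> filt j y ->
  mulL m mul i j (cl i x) (cl j y) = cl (i + j) (mul x y).
Proof.
exact: (gr_prod_class (op := @mul n p) (filtMD (V := F (n + p)))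
  (@filtM0 _ m (F n)) (@filtM0 _ m (F p)) (fun i j => @filtM_mul i j n p)
  (linearBl (mul_bilinear n p)) (linearBr (mul_bilinear n p))).
Qed.

Lemma filtM_d i n (x : F n.+1) : filt i x -> filt i.+1 (d n x).
Proof. by rewrite -[i.+1]addn1; apply: filtM_linear. Qed.

Lemma dL_cls i n (x : F n.+1) : filt i x -> dL m d i (cl i x) = cl i.+1 (d n x).
Proof.
move=> fx; apply: pred_ext => z; split.
  move=> [fz [x1 [[fx1 fx1x] fz1]]]; split => //.
  have -> : z - d n x = (z - d n x1) + d n (x1 - x) by rewrite linearB addrA subrK.
  by apply: filtMD => //; apply: filtM_d.
move=> [fz fzx]; split => //; exists x; split => //.
by split; rewrite ?subrr //; apply: filtM0.
Qed.

Lemma lin_mulDl i j n p (x x' : F n) (y : F p) :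
  filt i x -> filt i x' -> filt j y ->
  mulL m mul i j (Defs.addC (cl i x) (cl i x')) (cl j y) =
  Defs.addC (mulL m mul i j (cl i x) (cl j y)) (mulL m mul i j (cl i x') (cl j y)).
Proof.
move=> fx fx' fy; have fxx' := filtMD fx fx'.
by rewrite addC_cls // !mulL_cls // addC_cls ?mulDl //; apply: filtM_mul.
Qed.

Lemma lin_mulDr i j n p (x : F n) (y y' : F p) :
  filt i x -> filt j y -> filt j y' ->
  mulL m mul i j (cl i x) (Defs.addC (cl j y) (cl j y')) =
  Defs.addC (mulL m mul i j (cl i x) (cl j y)) (mulL m mul i j (cl i x) (cl j y')).
Proof.
move=> fx fy fy'; have fyy' := filtMD fy fy'.
by rewrite addC_cls // !mulL_cls // addC_cls ?mulDr //; apply: filtM_mul.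
Qed.

Lemma lin_mulZl k i j n p r (x : F n) (y : F p) :
  mpow m k r -> filt i x -> filt j y ->
  mulL m mul (k + i) j (actL m k i (clsR m k r) (cl i x)) (cl j y) =
  actL m k (i + j) (clsR m k r) (mulL m mul i j (cl i x) (cl j y)).
Proof.
move=> r_mpow fx fy; have frx := filtM_mpowZ m_ideal r_mpow fx.
rewrite actL_cls // !mulL_cls // actL_cls //; last exact: filtM_mul.
by rewrite mulZl addnA.
Qed.

Lemma lin_mulZr k i j n p r (x : F n) (y : F p) :
  mpow m k r -> filt i x -> filt j y ->
  mulL m mul i (k + j) (cl i x) (actL m k j (clsR m k r) (cl j y)) =
  actL m k (i + j) (clsR m k r) (mulL m mul i j (cl i x) (cl j y)).
Proof.
move=> r_mpow fx fy; have fry := filtM_mpowZ m_ideal r_mpow fy.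
rewrite actL_cls // !mulL_cls // actL_cls //; last exact: filtM_mul.
by rewrite mulZr addnCA.
Qed.

Hypothesis one_mul : forall n (x : F n), castF (add0n n) (mul one x) = x.

Lemma lin_mul1 i n (x : F n) : filt i x ->
  castP (add0n n) (mulL m mul 0 i (cl 0 one) (cl i x)) = cl i x.
Proof. by move=> fx; rewrite mulL_cls ?castP_cls ?one_mul //; apply: filtM_deg0. Qed.

Hypothesis mul_assoc : forall n p q (x : F n) (y : F p) (z : F q),
  castF (addnA n p q) (mul x (mul y z)) = mul (mul x y) z.

Lemma lin_mulA i j k n p q (x : F n) (y : F p) (z : F q) :
  filt i x -> filt j y -> filt k z ->
  castP (addnA n p q) (mulL m mul i (j + k) (cl i x) (mulL m mul j k (cl j y) (cl k z)))
  = mulL m mul (i + j) k (mulL m mul i j (cl i x) (cl j y)) (cl k z).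
Proof.
move=> fx fy fz; have fyz := filtM_mul fy fz; have fxy := filtM_mul fx fy.
by rewrite !mulL_cls // castP_cls mul_assoc addnA.
Qed.

Hypothesis mul_comm : forall n p (x : F n) (y : F p),
  mul x y = castF (addnC p n) ((-1) ^+ (n * p) *: mul y x).

Lemma lin_mulC i j n p (x : F n) (y : F p) : filt i x -> filt j y ->
  mulL m mul i j (cl i x) (cl j y) =
  castP (addnC p n) (signC (n * p) (mulL m mul j i (cl j y) (cl i x))).
Proof.
move=> fx fy.
by rewrite !mulL_cls // signC_cls (castP_cls m (addnC p n)) -mul_comm (addnC j i).
Qed.

Hypothesis mul_xx : forall n (x : F n), odd n -> mul x x = 0.

Lemma lin_mulxx i n (x : F n) : odd n -> filt i x ->
  mulL m mul i i (cl i x) (cl i x) = cl (i + i) (0 : F (n + n)).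
Proof. by move=> n_odd fx; rewrite mulL_cls // mul_xx. Qed.

Hypothesis d_mul : forall n p (x : F n.+1) (y : F p.+1),
  d (n + p.+1) (mul x y) =
  mul (d n x) y + (-1) ^+ n.+1 *: castF (esym (addnS n p)) (mul x (d p y)).

Lemma lin_d_mul i j n p (x : F n.+1) (y : F p.+1) : filt i x -> filt j y ->
  dL m d (i + j) (mulL m mul i j (cl i x) (cl j y)) =
  Defs.addC (mulL m mul i.+1 j (dL m d i (cl i x)) (cl j y))
    (signC n.+1 (castP (esym (addnS n p)) (mulL m mul i j.+1 (cl i x) (dL m d j (cl j y))))).
Proof.
move=> fx fy; have fdx := filtM_d fx; have fdy := filtM_d fy.
(* fixing [n] keeps the degree in the syntactic form [n + p.+1] of [d_mul] *)
rewrite mulL_cls // (dL_cls (n := n + p.+1) (filtM_mul fx fy)) !dL_cls // !mulL_cls //.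
rewrite d_mul (castP_cls m (esym (addnS n p))) signC_cls (addnS i j) addC_cls //.
by apply/filtMZ/filtM_castF; have := filtM_mul fx fdy; rewrite addnS.
Qed.

Hypothesis d_mul0l : forall p (x : F 0) (y : F p.+1), d p (mul x y) = mul x (d p y).

Lemma lin_d_mul0l i j p (x : F 0) (y : F p.+1) : filt i x -> filt j y ->
  dL m d (i + j) (mulL m mul i j (cl i x) (cl j y)) =
  mulL m mul i j.+1 (cl i x) (dL m d j (cl j y)).
Proof.
move=> fx fy; have fdy := filtM_d fy.
rewrite mulL_cls // (dL_cls (filtM_mul fx fy)) dL_cls // mulL_cls //.
by rewrite d_mul0l (addnS i j).
Qed.

Hypothesis d_mul0r : forall n (x : F n.+1) (y : F 0), d (n + 0) (mul x y) = mul (d n x) y.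

Lemma lin_d_mul0r i j n (x : F n.+1) (y : F 0) : filt i x -> filt j y ->
  dL m d (i + j) (mulL m mul i j (cl i x) (cl j y)) =
  mulL m mul i.+1 j (dL m d i (cl i x)) (cl j y).
Proof.
move=> fx fy; have fdx := filtM_d fx.
rewrite mulL_cls // (dL_cls (n := n + 0) (filtM_mul fx fy)) dL_cls // mulL_cls //.
by rewrite d_mul0r.
Qed.

End LinearPart.

Theorem lemma2p4 (R : comNzRingType) (m : R -> Prop)
    (F : nat -> lmodType R) (d : forall n, {linear F n.+1 -> F n})
    (mul : forall n p, F n -> F p -> F (n + p)) (one : F 0) :
  noetherian R -> local_max m ->
  is_complex d -> resolves_residue_field m d -> minimal_free m d ->
  is_DG_algebra d mul one ->
  lin_is_DG_algebra m d mul one.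
Proof.
move=> _ [m_ideal _ _] _ _ [_ d_minimal].
move=> [mul_linearl mul_linearr one_mul mul_assoc [mul_comm mul_xx [d_mul d_mul0l d_mul0r]]].
split.
- by move=> i j n p x y fx fy; split; [apply: filtM_mul | apply: mulL_cls].
- by split; [apply: lin_mulDl | apply: lin_mulDr].
- by move=> k i j n p r x y r_mpow fx fy; split; [apply: lin_mulZl | apply: lin_mulZr].
- exact: lin_mul1.
- split; first exact: lin_mulA.
  split; [exact: lin_mulC | exact: lin_mulxx |].
  by split; [apply: lin_d_mul | apply: lin_d_mul0l | apply: lin_d_mul0r].
Qed.
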